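(* Let $X$ be a proper CAT(0) space or a disjoint union of countably many proper CAT(0) spaces, endowed with an isometric action of a group $\Gamma$ having discrete orbits. Then $X$ has a locally finite $\Gamma$-good cover $\mathcal{U}$.
   Context: In a disjoint union of metric spaces, points in different pieces are at distance $\infty$. A $\Gamma$-good cover of such $X$ is a cover $\mathcal{U}$ of $X$ by open metric balls such that (1) $\Gamma\cdot\mathcal{U}=\mathcal{U}$, and (2) if $B\in\mathcal{U}$, $\gamma\in\Gamma$ and $\gamma\cdot B\cap B\neq\emptyset$, then $\gamma\cdot B=B$. *)

From HB Require Import structures.
From mathcomp Require Import all_boot all_order all_algebra.
From mathcomp Require Import all_classical all_reals ereal.
Set Implicit Arguments. Unset Strict Implicit. Unset Printing Implicit Defensive.
Import Order.TTheory GRing.Theory Num.Theory.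
Local Open Scope classical_set_scope.
Local Open Scope ring_scope.

Section Defs.
Variable R : realType.

Section Metric.
Variables (T : Type) (d : T -> T -> R).

Definition is_metric : Prop :=
  (forall x y, d x y = 0 <-> x = y) /\
  (forall x y, d x y = d y x) /\
  (forall x y z, d x z <= d x y + d y z).

Definition rball (x : T) (r : R) : set T := [set y | d x y < r].
Definition rcball (x : T) (r : R) : set T := [set y | d x y <= r].

Definition ropen (U : set T) : Prop :=
  forall x, U x -> exists2 e : R, 0 < e & rball x e `<=` U.

Definition rcompact (K : set T) : Prop :=
  forall F : set (set T), (forall U, F U -> ropen U) ->
    K `<=` \bigcup_(U in F) U ->
    exists F', [/\ F' `<=` F, finite_set F' & K `<=` \bigcup_(U in F') U].

Definition is_proper : Prop := forall x r, rcompact (rcball x r).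

Definition geodesic (c : R -> T) (a b : T) : Prop :=
  [/\ c 0 = a, c (d a b) = b &
     forall s t, 0 <= s <= d a b -> 0 <= t <= d a b -> d (c s) (c t) = `|s - t|].

Definition geodesic_space : Prop := forall a b, exists c, geodesic c a b.

Definition eucl (p q : R * R) : R :=
  Num.sqrt ((p.1 - q.1) ^+ 2 + (p.2 - q.2) ^+ 2).
Definition lerp (p q : R * R) (t : R) : R * R :=
  (p.1 + t * (q.1 - p.1), p.2 + t * (q.2 - p.2)).

(* x lies on the geodesic side c from a to b, and xb is its comparison point
   on the comparison side [ab, bb] *)
Definition onside (c : R -> T) (a b : T) (ab bb : R * R) (x : T) (xb : R * R)
  : Prop :=
  exists s, [/\ 0 <= s <= d a b, x = c s & xb = lerp ab bb (s / d a b)].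

Definition cat0_ineq : Prop :=
  forall (p q r : T) (cpq cqr crp : R -> T) (pb qb rb : R * R),
    geodesic cpq p q -> geodesic cqr q r -> geodesic crp r p ->
    eucl pb qb = d p q -> eucl qb rb = d q r -> eucl rb pb = d r p ->
    forall x y xb yb,
      (onside cpq p q pb qb x xb \/ onside cqr q r qb rb x xb \/
       onside crp r p rb pb x xb) ->
      (onside cpq p q pb qb y yb \/ onside cqr q r qb rb y yb \/
       onside crp r p rb pb y yb) ->
      d x y <= eucl xb yb.

Definition is_CAT0 : Prop := [/\ is_metric, geodesic_space & cat0_ineq].

Definition proper_CAT0 : Prop := is_CAT0 /\ is_proper.

End Metric.

Section Union.
Variables (I : Type) (Xi : I -> Type) (di : forall i, Xi i -> Xi i -> R).

Definition union_dist (u v : {i : I & Xi i}) : \bar R :=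
  match pselect (projT1 v = projT1 u) with
  | left e => ((di (projT2 u) (eq_rect _ Xi (projT2 v) _ e))%:E)
  | right _ => +oo%E
  end.
End Union.

Definition is_group (G : Type) (mul : G -> G -> G) (one : G) (inv : G -> G)
  : Prop :=
  [/\ forall a b c, mul a (mul b c) = mul (mul a b) c,
      forall a, mul one a = a,
      forall a, mul a one = a,
      forall a, mul (inv a) a = one &
      forall a, mul a (inv a) = one].

Section Action.
Variables (X : Type) (D : X -> X -> \bar R).
Variables (G : Type) (mul : G -> G -> G) (one : G) (act : G -> X -> X).

Definition isometric_action : Prop :=
  [/\ forall x, act one x = x,
      forall g h x, act (mul g h) x = act g (act h x) &
      forall g x y, D (act g x) (act g y) = D x y].

Definition discrete_orbits : Prop :=
  forall x, exists2 e : R, 0 < e &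
    forall g, (D x (act g x) < e%:E)%E -> act g x = x.

Definition eball (x : X) (r : R) : set X := [set y | (D x y < r%:E)%E].

Definition open_metric_ball (B : set X) : Prop :=
  exists x r, 0 < r /\ B = eball x r.

Definition good_cover (U : set (set X)) : Prop :=
  [/\ forall B, U B -> open_metric_ball B,
      forall y, exists2 B, U B & B y,
      forall g S, U S <-> exists2 B, U B & S = act g @` B &
      forall g B, U B -> act g @` B `&` B !=set0 -> act g @` B = B].

Definition locally_finite (U : set (set X)) : Prop :=
  forall x, exists2 r : R, 0 < r &
    finite_set [set B | U B /\ B `&` eball x r !=set0].

End Action.
End Defs.

From HB Require Import structures.
From mathcomp Require Import all_boot all_order all_algebra.
From mathcomp Require Import all_classical all_reals ereal.
From mathcomp Require Import lra.
Set Implicit Arguments. Unset Strict Implicit. Unset Printing Implicit Defensive.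
Import Order.TTheory GRing.Theory Num.Theory.
Local Open Scope classical_set_scope.
Local Open Scope ring_scope.

(* Fix an exhaustion
   [h] (the distance to a base point, shifted by the index of the piece in the
   disjoint-union case) and give every point [c] a radius [rad c] below half the
   distance from [c] to the rest of its orbit; then a ball of radius [rad c]
   around a point of the orbit of [c] meets a translate of itself only if the
   two coincide.  The [n]-th layer, the points at height at most [n + 1] whose
   whole orbit stays at height at least [n], is closed and bounded, hence
   covered by finitely many such balls, and every orbit meets some layer; the
   translates of all these balls form a good cover.  A ball meeting the
   [1/2]-ball around [y] comes from a layer below [h y + 1] and from an orbit
   point near [y]; properness and discreteness of orbits leave finitely many. *)

Lemma finite_subset_image (T U : Type) (f : T -> U) (A : set T) (F : set U) :
  finite_set F -> F `<=` f @` A ->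
  exists C, [/\ finite_set C, C `<=` A & F `<=` f @` C].
Proof.
move=> fF FfA; case: (pselect (exists t : T, True)) => [[t0 _]|T0]; last first.
  exists set0; split => // u /FfA[t]; case: T0; by exists t.
have /choice[pre Hpre] : forall u, exists t, F u -> A t /\ f t = u.
  move=> u; case: (pselect (F u)) => [/FfA[t At <-]|nFu]; first by exists t.
  by exists t0 => /nFu.
exists (pre @` F); split; first exact: finite_image.
- by move=> _ [u Fu <-]; case: (Hpre u Fu).
- by move=> u Fu; exists (pre u); [exists u | case: (Hpre u Fu)].
Qed.

Lemma finite_set_sub_bigcup_subsingleton (T : Type) (Y : set T) (F : set (set T)) :
  finite_set F -> Y `<=` \bigcup_(B in F) B ->
  (forall B, F B -> forall a b, Y a -> Y b -> B a -> B b -> a = b) ->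
  finite_set Y.
Proof.
move=> fF YF Bsub.
case: (pselect (exists a, Y a)) => [[a0 Ya0]|Y0]; last first.
  by apply: (sub_finite_set _ (finite_set0 T)) => a Ya; apply: Y0; exists a.
have /choice[pick Hpick] : forall B : set T, exists z, (exists a, Y a /\ B a) -> Y z /\ B z.
  move=> B; case: (pselect (exists a, Y a /\ B a)) => [[a YBa]|nYB]; first by exists a.
  by exists a0 => /nYB.
apply: (sub_finite_set _ (finite_image pick fF)) => a Ya.
have [B FB Ba] := YF a Ya; exists B => //.
have [Yp Bp] := Hpick B (ex_intro _ a (conj Ya Ba)).
exact: Bsub Yp Ya Bp Ba.
Qed.

Section ExtendedPseudometric.
Variables (R : realType) (X : Type) (D : X -> X -> \bar R).

Definition eopen (U : set X) :=
  forall x, U x -> exists2 e : R, 0 < e & eball D x e `<=` U.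

Definition ecompact (K : set X) :=
  forall F : set (set X), (forall U, F U -> eopen U) ->
    K `<=` \bigcup_(U in F) U ->
    exists F', [/\ F' `<=` F, finite_set F' & K `<=` \bigcup_(U in F') U].

Hypotheses (D_refl : forall x, D x x = 0%E) (D_ge0 : forall x y, (0 <= D x y)%E)
  (DC : forall x y, D x y = D y x) (D_triangle : forall x y z, (D x z <= D x y + D y z)%E).

Lemma eball_center x r : 0 < r -> eball D x r x.
Proof. by move=> r0; rewrite /eball /= D_refl lte_fin. Qed.

Lemma eball_trans a b c r s :
  (D a b < r%:E)%E -> (D b c < s%:E)%E -> (D a c < (r + s)%:E)%E.
Proof. by move=> ab bc; apply: le_lt_trans (D_triangle a b c) _; rewrite EFinD lteD. Qed.

Lemma eball_open x r : eopen (eball D x r).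
Proof.
move=> y; rewrite /eball /=; case Dxy: (D x y) => [d| |] // dr; last first.
  by have := D_ge0 x y; rewrite Dxy.
exists (r - d); first by rewrite subr_gt0 -lte_fin.
move=> z /= yz; apply: le_lt_trans (D_triangle x y z) _.
by rewrite Dxy -(subrKC d r) EFinD lteD2lE.
Qed.

Lemma ecompact_bigcup_subcover (J F : set (set X)) :
  finite_set J -> (forall K, J K -> ecompact K) -> (forall V, F V -> eopen V) ->
  \bigcup_(K in J) K `<=` \bigcup_(V in F) V ->
  exists F', [/\ F' `<=` F, finite_set F' & \bigcup_(K in J) K `<=` \bigcup_(V in F') V].
Proof.
move=> fJ cJ oF JF.
have /choice[sub Hsub] : forall K, exists F', J K ->
    [/\ F' `<=` F, finite_set F' & K `<=` \bigcup_(V in F') V].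
  move=> K; case: (pselect (J K)) => JK; last by exists set0.
  have [F' HF'] := cJ K JK F oF (fun x Kx => JF x (ex_intro2 _ _ K JK Kx)).
  by exists F'.
exists (\bigcup_(K in J) sub K); split.
- by move=> V [K JK]; case: (Hsub K JK) => + _ _; apply.
- by apply: bigcup_finite => // K JK; case: (Hsub K JK).
- move=> x [K JK Kx]; have [_ _ /(_ x Kx)[V subV Vx]] := Hsub K JK.
  by exists V => //; exists K.
Qed.

Lemma separated_ecompact_finite (Y : set X) (J : set (set X)) (e : R) :
  0 < e ->
  finite_set J -> (forall K, J K -> ecompact K) -> Y `<=` \bigcup_(K in J) K ->
  (forall a b, Y a -> Y b -> (D a b < e%:E)%E -> a = b) -> finite_set Y.
Proof.
move=> e0 fJ cJ YJ Ysep.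
have e20 : 0 < e / 2 by rewrite divr_gt0.
(* each ball of radius [e / 2] contains at most one point of [Y] *)
have [||F' [F'balls fF' JF']] :=
  @ecompact_bigcup_subcover J [set eball D x (e / 2) | x in [set: X]] fJ cJ.
- by move=> _ [x _ <-]; exact: eball_open.
- by move=> x _; exists (eball D x (e / 2)); [exists x | exact: eball_center].
apply: (finite_set_sub_bigcup_subsingleton fF') => [x /YJ/JF'//|].
move=> B /F'balls[x _ <-] a b Ya Yb xa xb.
by apply: Ysep => //; rewrite [e]splitr; apply: eball_trans xb; rewrite DC.
Qed.

Lemma ecompact_net (A : set X) (J : set (set X)) (rad : X -> R) :
  finite_set J -> (forall K, J K -> ecompact K) -> A `<=` \bigcup_(K in J) K ->
  eopen (~` A) -> (forall x, 0 < rad x) ->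
  exists C, [/\ finite_set C, C `<=` A & A `<=` \bigcup_(c in C) eball D c (rad c)].
Proof.
move=> fJ cJ AJ oAC rad0.
pose ball x := eball D x (rad x).
have [||F' [F'F fF' JF']] :=
  @ecompact_bigcup_subcover J (ball @` A `|` [set ~` A]) fJ cJ.
- by move=> _ [[x _ <-]|->] //; exact: eball_open.
- move=> x _; case: (pselect (A x)) => Ax; last by exists (~` A); [right|].
  by exists (ball x); [left; exists x | exact: eball_center].
have [||C [fC CA F'C]] := @finite_subset_image _ _ ball A (F' `&` ball @` A).
- exact: finite_setIl.
- by move=> V [].
exists C; split => // x Ax.
have [V F'V Vx] := JF' x (AJ x Ax).
have [Vball|VAC] := F'F V F'V; last by rewrite VAC in Vx.
by have [c Cc cV] := F'C V (conj F'V Vball); exists c => //; rewrite -/(ball c) cV.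
Qed.

End ExtendedPseudometric.
Section GoodCover.
Variables (R : realType) (X : Type) (D : X -> X -> \bar R).
Hypotheses (D_refl : forall x, D x x = 0%E) (D_ge0 : forall x y, (0 <= D x y)%E)
  (DC : forall x y, D x y = D y x)
  (D_triangle : forall x y z, (D x z <= D x y + D y z)%E).
Variables (G : Type) (mul : G -> G -> G) (one : G) (inv : G -> G)
  (act : G -> X -> X).
Hypotheses (G_group : is_group mul one inv)
  (G_isometric : isometric_action D mul one act)
  (G_discrete : discrete_orbits D act).
Variable h : X -> R.
Hypotheses (h_ge0 : forall x, 0 <= h x)
  (h_lipschitz : forall x y r, (D x y < r%:E)%E -> h y < h x + r)
  (h_proper : forall r : R, exists2 J : set (set X), finite_set J &
     (forall K, J K -> ecompact D K) /\ [set x | h x <= r] `<=` \bigcup_(K in J) K).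

Let act1 : forall x, act one x = x. Proof. by case: G_isometric. Qed.
Let actM : forall g k x, act (mul g k) x = act g (act k x).
Proof. by case: G_isometric. Qed.
Let act_isometry : forall g x y, D (act g x) (act g y) = D x y.
Proof. by case: G_isometric. Qed.

Lemma actK g x : act g (act (inv g) x) = x.
Proof. by case: G_group => _ _ _ _ mulV; rewrite -actM mulV act1. Qed.

Lemma actVK g x : act (inv g) (act g x) = x.
Proof. by case: G_group => _ _ _ mulVg _; rewrite -actM mulVg act1. Qed.

Lemma act_eball g x r : act g @` eball D x r = eball D (act g x) r.
Proof.
apply/seteqP; split => [_ [y xy <-]|z xz]; first by rewrite /eball /= act_isometry.
by exists (act (inv g) z); rewrite ?actK // /eball /= -(act_isometry g) actK.
Qed.

Let gap x : R := sval (cid2 (G_discrete x)).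

Let gap_gt0 x : 0 < gap x.
Proof. by rewrite /gap; case: cid2. Qed.

Lemma orbit_close g k c :
  (D (act g c) (act k c) < (gap c)%:E)%E -> act g c = act k c.
Proof.
have [mulA mul1g _ _ mulgV] := G_group.
move=> close; have : (D c (act (mul (inv g) k) c) < (gap c)%:E)%E.
  by rewrite actM -(act_isometry g) actK.
rewrite /gap; case: cid2 => e /= _ fixed /fixed fix_c.
by rewrite -{1}fix_c -actM mulA mulgV mul1g.
Qed.

Let rad x := Num.min (gap x) 1 / 2.

Let rad_gt0 x : 0 < rad x.
Proof. by rewrite divr_gt0 // lt_min gap_gt0 ltr01. Qed.

Let rad_double x : rad x + rad x <= gap x /\ rad x + rad x <= 1.
Proof. by rewrite -splitr ge_min lexx ge_min lexx orbT. Qed.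

Let layer (n : nat) :=
  [set x | h x <= n%:R + 1 /\ forall g, n%:R <= h (act g x)].

Lemma orbit_meets_layer y : exists n g, layer n (act g y).
Proof.
pose above (n : nat) := forall g, n%:R <= h (act g y).
have [n [above_n not_above_Sn]] : exists n, above n /\ ~ above n.+1.
  apply: contrapT => top; suff above_all n : above n.
    by have := above_all (Num.truncn (h y)).+1 one; rewrite act1 leNgt truncnS_gt.
  elim: n => [g|n above_n]; first exact: h_ge0.
  by apply: contrapT => not_above_Sn; apply: top; exists n.
move/existsNP: not_above_Sn => [g /negP]; rewrite -ltNge => hg_lt.
exists n, g; split; first by rewrite natr1 ltW.
by move=> k; rewrite -actM.
Qed.

Lemma layer_openC n : eopen D (~` layer n).
Proof.
move=> x /not_andP[/negP|/existsNP[g /negP]]; rewrite -ltNge => lt.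
- exists (h x - (n%:R + 1)); first by rewrite subr_gt0.
  move=> y; rewrite /eball /= DC => /h_lipschitz hy [hy_le _]; move: hy_le hy; lra.
- exists (n%:R - h (act g x)); first by rewrite subr_gt0.
  move=> y; rewrite /eball /= -(act_isometry g) => /h_lipschitz hy [_ /(_ g)].
  move: hy; lra.
Qed.

Lemma layer_net n : exists C,
  [/\ finite_set C, C `<=` layer n & layer n `<=` \bigcup_(c in C) eball D c (rad c)].
Proof.
have [J fJ [cJ hJ]] := h_proper (n%:R + 1).
apply: (ecompact_net D_refl D_ge0 D_triangle fJ cJ); last 2 first.
- exact: layer_openC.
- exact: rad_gt0.
by move=> x [hx _]; exact: hJ.
Qed.

Lemma orbit_near_finite c y :
  finite_set [set z | (exists g, z = act g c) /\ (D y z < 1%:E)%E].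
Proof.
have [J fJ [cJ hJ]] := h_proper (h y + 1).
apply: (separated_ecompact_finite D_refl D_ge0 DC D_triangle (gap_gt0 c) fJ cJ).
  by move=> z [_ /h_lipschitz/ltW/hJ].
by move=> _ _ [[g ->] _] [[k ->] _]; exact: orbit_close.
Qed.

Let translates (C : nat -> set X) :=
  [set S | exists n c g, C n c /\ S = eball D (act g c) (rad c)].

Section Translates.
Variable C : nat -> set X.
Hypothesis C_net : forall n, [/\ finite_set (C n), C n `<=` layer n &
  layer n `<=` \bigcup_(c in C n) eball D c (rad c)].

Lemma translates_cover y : exists2 B, translates C B & B y.
Proof.
have [n [g gy]] := orbit_meets_layer y; have [_ _ /(_ _ gy)[c Cc gyc]] := C_net n.
exists (eball D (act (inv g) c) (rad c)); first by exists n, c, (inv g).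
by rewrite -(act_eball (inv g)); exists (act g y); rewrite // actVK.
Qed.

Lemma translates_invariant g S :
  translates C S <-> exists2 B, translates C B & S = act g @` B.
Proof.
split.
- move=> [n [c [k [Cc ->]]]].
  exists (eball D (act (mul (inv g) k) c) (rad c)); first by exists n, c, (mul (inv g) k).
  by rewrite act_eball actM actK.
- move=> [_ [n [c [k [Cc ->]]]] ->]; exists n, c, (mul g k).
  by rewrite act_eball actM.
Qed.

Lemma translates_good g B :
  translates C B -> act g @` B `&` B !=set0 -> act g @` B = B.
Proof.
move=> [n [c [k [Cc ->]]]]; rewrite act_eball -actM => -[z [gz kz]].
congr (eball D _ _); apply: orbit_close.
apply: lt_le_trans (eball_trans D_triangle gz _) _; first by rewrite DC; exact: kz.
by rewrite lee_fin; case: (rad_double c).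
Qed.

Lemma translates_locally_finite x :
  finite_set [set B | translates C B /\ B `&` eball D x (1 / 2) !=set0].
Proof.
pose N := (Num.truncn (h x + 1)).+1.
apply: (@sub_finite_set _ _ (\bigcup_(n in `I_N) \bigcup_(c in C n)
    [set eball D z (rad c) | z in [set z | (exists g, z = act g c) /\ (D x z < 1%:E)%E]])).
  move=> _ [[n [c [g [Cc ->]]]] [z [gcz xz]]].
  have xgc : (D x (act g c) < 1%:E)%E.
    apply: lt_le_trans (eball_trans D_triangle xz _) _; first by rewrite DC; exact: gcz.
    by rewrite lee_fin; have [_] := rad_double c; lra.
  have [_ /(_ c Cc)[_ /(_ g) n_le] _] := C_net n.
  exists n; last by exists c => //; exists (act g c) => //; split => //; exists g.
  rewrite /= -(ltr_nat R); apply: le_lt_trans n_le _.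
  exact: lt_trans (h_lipschitz xgc) (truncnS_gt _).
apply: bigcup_finite => [|n _]; first exact: finite_II.
apply: bigcup_finite => [|c _]; first by case: (C_net n).
exact/finite_image/orbit_near_finite.
Qed.

End Translates.

Lemma exhaustion_good_cover :
  exists U, good_cover D act U /\ locally_finite D U.
Proof.
have /choice[C C_net] := layer_net.
exists (translates C); split.
  split; [by move=> _ [n [c [g [_ ->]]]]; exists (act g c), (rad c)
         | exact: translates_cover | exact: translates_invariant
         | exact: translates_good].
by move=> x; exists (1 / 2); [rewrite divr_gt0 | exact: translates_locally_finite].
Qed.
End GoodCover.

Lemma is_metric_facts (R : realType) (T : Type) (d : T -> T -> R) :
  is_metric d ->
  [/\ forall x, d x x = 0, forall x y, 0 <= d x y, forall x y, d x y = d y x &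
      forall x y z, d x z <= d x y + d y z].
Proof.
move=> [d0 [dC d_tri]]; have dxx x : d x x = 0 by apply/d0.
by split => // x y; have := d_tri x y x; rewrite dxx (dC y x); lra.
Qed.

Lemma ecompact_EFin (R : realType) (T : Type) (d : T -> T -> R) (K : set T) :
  rcompact d K -> ecompact (fun x y => (d x y)%:E) K.
Proof. by move=> cK F oF; apply: cK. Qed.

Lemma proper_metric_good_cover (R : realType) (X : Type) (d : X -> X -> R) :
  is_metric d -> is_proper d ->
  forall (G : Type) (mul : G -> G -> G) (one : G) (inv : G -> G)
         (act : G -> X -> X),
    is_group mul one inv ->
    isometric_action (fun x y => (d x y)%:E) mul one act ->
    discrete_orbits (fun x y => (d x y)%:E) act ->
    exists U : set (set X),
      good_cover (fun x y => (d x y)%:E) act U /\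
      locally_finite (fun x y => (d x y)%:E) U.
Proof.
move=> /is_metric_facts[dxx d_ge0 dC d_tri] d_proper G mul one inv act.
move=> G_group G_iso G_disc.
have cover := exhaustion_good_cover (D := fun x y => (d x y)%:E)
  (fun x => congr1 EFin (dxx x)) d_ge0 (fun x y => congr1 EFin (dC x y)) d_tri
  G_group G_iso G_disc.
case: (pselect (exists p : X, True)) => [[p _]|X0].
- apply: (cover (d p)) => // [x y r|r].
  + by rewrite lte_fin; have := d_tri p x y; lra.
  + exists [set rcball d p r]; first exact: finite_set1.
    by split=> [_ ->|x px]; [exact: ecompact_EFin | exists (rcball d p r)].
- apply: (cover (fun=> 0)) => // [x|r]; first by case: X0; exists x.
  by exists set0 => //; split=> // x; case: X0; exists x.
Qed.

Section DisjointUnion.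
Variables (R : realType) (I : Type) (Xi : I -> Type)
  (di : forall i, Xi i -> Xi i -> R).
Arguments di : clear implicits.
Hypotheses (di_metric : forall i, is_metric (di i))
  (di_proper : forall i, is_proper (di i)).

Lemma union_distE i (a b : Xi i) :
  union_dist di (existT Xi i a) (existT Xi i b) = (di i a b)%:E.
Proof.
by rewrite /union_dist /=; case: pselect => // e; rewrite (Prop_irrelevance e erefl).
Qed.

Lemma union_dist_neq i j (a : Xi i) (b : Xi j) :
  i <> j -> union_dist di (existT Xi i a) (existT Xi j b) = +oo%E.
Proof. by move=> ij; rewrite /union_dist /=; case: pselect => // ji; case: ij. Qed.

Lemma union_dist_refl (x : {i : I & Xi i}) : union_dist di x x = 0%E.
Proof.
by case: x => i a; rewrite union_distE; have [-> _ _ _] := is_metric_facts (di_metric i).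
Qed.

Lemma union_dist_ge0 (x y : {i : I & Xi i}) : (0 <= union_dist di x y)%E.
Proof.
case: x y => i a [j b]; case: (pselect (i = j)) => [ij|ij].
  by subst j; rewrite union_distE lee_fin; have [_ -> _ _] := is_metric_facts (di_metric i).
by rewrite union_dist_neq.
Qed.

Lemma union_distC (x y : {i : I & Xi i}) : union_dist di x y = union_dist di y x.
Proof.
case: x y => i a [j b]; case: (pselect (i = j)) => [ij|ij].
  by subst j; rewrite !union_distE; have [_ _ -> _] := is_metric_facts (di_metric i).
by rewrite !union_dist_neq // => ji; apply: ij.
Qed.

Lemma union_dist_triangle (x y z : {i : I & Xi i}) :
  (union_dist di x z <= union_dist di x y + union_dist di y z)%E.
Proof.
case: x y z => i a [j b] [k c].
case: (pselect (i = j)) => [ij|ij]; last first.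
  rewrite (union_dist_neq _ _ ij) addye ?leey //.
  by rewrite -ltNye (lt_le_trans _ (union_dist_ge0 _ _)).
subst j; case: (pselect (i = k)) => [ik|ik]; last first.
  by rewrite !(union_dist_neq _ _ ik) addey // -ltNye (lt_le_trans _ (union_dist_ge0 _ _)).
subst k; rewrite !union_distE -EFinD lee_fin.
by have [_ _ _ ->] := is_metric_facts (di_metric i).
Qed.

Lemma ecompact_existT i (K : set (Xi i)) :
  rcompact (di i) K -> ecompact (union_dist di) (existT Xi i @` K).
Proof.
move=> cK F oF KF.
pose slice (V : set {i : I & Xi i}) := [set b : Xi i | V (existT Xi i b)].
have [||Fi' [Fi'F fFi' KFi']] := cK (slice @` F).
- move=> _ [V FV <-] b Vb; have [e e0 eV] := oF V FV _ Vb.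
  by exists e => // c bc; apply: eV; rewrite /eball /= union_distE lte_fin.
- move=> b Kb; have [V FV Vb] := KF _ (ex_intro2 _ _ b Kb erefl).
  by exists (slice V) => //; exists V.
have [F' [fF' F'F Fi'F']] := finite_subset_image fFi' Fi'F.
exists F'; split => // _ [b /KFi'[_ /Fi'F'[V F'V <-] Vb] <-].
by exists V.
Qed.

(* Pieces may be empty, so the base point of a piece is extracted from any of
   its points; by proof irrelevance it does not depend on which. *)
Let base i (b : Xi i) : Xi i :=
  sval (cid (ex_intro (fun _ : Xi i => True) b Logic.I)).

Let baseE i (a b : Xi i) : base a = base b.
Proof.
by rewrite /base (Prop_irrelevance (ex_intro _ a Logic.I) (ex_intro _ b Logic.I)).
Qed.

Let height (x : {i : I & Xi i}) := di (projT1 x) (base (projT2 x)) (projT2 x).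

Lemma height_lipschitz x y r :
  (union_dist di x y < r%:E)%E -> height y < height x + r.
Proof.
case: x y => i a [j b]; case: (pselect (i = j)) => [ij|ij]; last by rewrite union_dist_neq.
subst j; rewrite union_distE lte_fin /height /= (baseE b a) => ab.
by have [_ _ _ /(_ (base a) a b)] := is_metric_facts (di_metric i); lra.
Qed.

Lemma ecompact_height_le (P : set I) r : (forall i j, P i -> P j -> i = j) ->
  ecompact (union_dist di) [set x | P (projT1 x) /\ height x <= r].
Proof.
move=> P_sub; set S := [set x | _ /\ _].
case: (pselect (exists x, S x)) => [[[i a] [Pi _]]|S0]; last first.
  by move=> F _ _; exists set0; split => // x Sx; case: S0; exists x.
suff -> : S = existT Xi i @` rcball (di i) (base a) r by exact/ecompact_existT/di_proper.
apply/seteqP; rewrite /S; split => [[j b] /= [Pj hb]|_ [b ab <-]].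
  by have ji := P_sub _ _ Pj Pi; subst j; exists b; rewrite // /rcball /= (baseE a b).
by split; rewrite // /height /= (baseE b a).
Qed.

Lemma union_proper_metric_good_cover : countable [set: I] ->
  forall (G : Type) (mul : G -> G -> G) (one : G) (inv : G -> G)
         (act : G -> {i : I & Xi i} -> {i : I & Xi i}),
    is_group mul one inv ->
    isometric_action (union_dist di) mul one act ->
    discrete_orbits (union_dist di) act ->
    exists U : set (set {i : I & Xi i}),
      good_cover (union_dist di) act U /\ locally_finite (union_dist di) U.
Proof.
move=> /pcard_injP[f f_inj] G mul one inv act G_group G_iso G_disc.
have {}f_inj i j : f i = f j -> i = j by apply: f_inj; rewrite in_setT.
have height_ge0 x : 0 <= height x.
  by case: x => i a; have [_ -> _ _] := is_metric_facts (di_metric i).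
apply: (exhaustion_good_cover union_dist_refl union_dist_ge0 union_distC
  union_dist_triangle G_group G_iso G_disc (h := fun x => (f (projT1 x))%:R + height x)).
- by move=> x; rewrite addr_ge0.
- move=> [i a] [j b] r ab; have := height_lipschitz ab.
  case: (pselect (i = j)) => [ij|ij]; last by rewrite union_dist_neq in ab.
  by subst j => /=; lra.
- move=> r; pose slab m := [set x | (f (projT1 x) = m) /\ height x <= r].
  exists (slab @` `I_(Num.truncn r).+1); first exact/finite_image/finite_II.
  split=> [_ [m _ <-]|x /= hx].
    apply: (ecompact_height_le (P := fun i => f i = m)) => i j fi fj.
    by apply: f_inj; rewrite fi fj.
  have fx_ge0 : 0 <= (f (projT1 x))%:R :> R by [].
  exists (slab (f (projT1 x))); last by split => //; lra.
  exists (f (projT1 x)) => //; rewrite /= -(ltr_nat R).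
  by apply: le_lt_trans (truncnS_gt r); have := height_ge0 x; lra.
Qed.
End DisjointUnion.

Theorem proposition4p2 (R : realType) :
  (forall (X : Type) (d : X -> X -> R),
     proper_CAT0 d ->
     forall (G : Type) (mul : G -> G -> G) (one : G) (inv : G -> G)
            (act : G -> X -> X),
       is_group mul one inv ->
       isometric_action (fun x y => (d x y)%:E) mul one act ->
       discrete_orbits (fun x y => (d x y)%:E) act ->
       exists U : set (set X),
         good_cover (fun x y => (d x y)%:E) act U /\
         locally_finite (fun x y => (d x y)%:E) U) /\
  (forall (I : Type) (Xi : I -> Type) (di : forall i, Xi i -> Xi i -> R),
     countable [set: I] ->
     (forall i, proper_CAT0 (di i)) ->
     forall (G : Type) (mul : G -> G -> G) (one : G) (inv : G -> G)
            (act : G -> {i : I & Xi i} -> {i : I & Xi i}),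
       is_group mul one inv ->
       isometric_action (union_dist di) mul one act ->
       discrete_orbits (union_dist di) act ->
       exists U : set (set {i : I & Xi i}),
         good_cover (union_dist di) act U /\
         locally_finite (union_dist di) U).
Proof.
split=> [X d [[d_metric _ _] d_proper]|I Xi di I_countable pieces].
  exact: proper_metric_good_cover.
apply: union_proper_metric_good_cover I_countable => i.
- by have [[]] := pieces i.
- by have [] := pieces i.
Qed.
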